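(* Let $G=(V_G,E_G)$ and $H=(V_H,E_H)$ be two vertex-disjoint digraphs. Then: 1. $\mathrm{dpw}(G\oplus H)=\max\{\mathrm{dpw}(G),\mathrm{dpw}(H)\}$; 2. $\mathrm{dpw}(G\oslash H)=\max\{\mathrm{dpw}(G),\mathrm{dpw}(H)\}$; 3. for every directed union $G\ominus H$ of $G$ and $H$, $\mathrm{dpw}(G\ominus H)=\max\{\mathrm{dpw}(G),\mathrm{dpw}(H)\}$; 4. $\mathrm{dpw}(G\otimes H)=\min\{\mathrm{dpw}(G)+|V_H|,\ \mathrm{dpw}(H)+|V_G|\}$.
   Context: Digraphs are finite, without loops or multiple arcs; arcs are ordered pairs $(u,v)$ with $u\neq v$. A directed path-decomposition of a digraph $G=(V,E)$ is a sequence $(X_1,\ldots,X_r)$ of subsets of $V$ (bags) such that: (i) $X_1\cup\cdots\cup X_r=V$; (ii) for each $(u,v)\in E$ there are $i\le j$ with $u\in X_i$, $v\in X_j$; (iii) if $u\in X_i$ and $u\in X_j$ with $i\le j$, then $u\in X_\ell$ for all $i\le \ell\le j$. Its width is $\max_i |X_i|-1$, and the directed path-width $\mathrm{dpw}(G)$ is the minimum width of a directed path-decomposition of $G$. For vertex-disjoint digraphs $G=(V_G,E_G)$, $H=(V_H,E_H)$: the disjoint union $G\oplus H$ has vertex set $V_G\cup V_H$ and arc set $E_G\cup E_H$; the series composition $G\otimes H$ is $G\oplus H$ plus all arcs $(u,v)$ and $(v,u)$ with $u\in V_G$, $v\in V_H$; the order composition $G\oslash H$ is $G\oplus H$ plus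 all arcs $(u,v)$ with $u\in V_G$, $v\in V_H$; a directed union $G\ominus H$ is any digraph on $V_G\cup V_H$ obtained from $G\oplus H$ by adding some (possibly none or all) arcs $(u,v)$ with $u\in V_G$, $v\in V_H$ (so $G,H$ are induced subdigraphs and there is no arc from $V_H$ to $V_G$). *)

(* Digraphs on a finite vertex type T, arcs given by a
   boolean relation E : rel T (loops excluded by an irreflexivity hypothesis
   where needed). *)
From mathcomp Require Import all_boot.
From Stdlib Require Import ClassicalEpsilon.

Set Implicit Arguments.
Unset Strict Implicit.
Unset Printing Implicit Defensive.

Section DPW.
Variable T : finType.

Definition is_dpd (E : rel T) (s : seq {set T}) : Prop :=
  [/\ (\bigcup_(X <- s) X) = [set: T],
      (forall u v, E u v -> exists i j, [/\ i <= j, j < size s,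
                        u \in nth set0 s i & v \in nth set0 s j]) &
      (forall u i j l, i <= l -> l <= j -> j < size s ->
          u \in nth set0 s i -> u \in nth set0 s j -> u \in nth set0 s l)].

Definition dpd_width (s : seq {set T}) : nat := (\max_(X <- s) #|X|).-1.

Definition has_dpd_of_width (E : rel T) (k : nat) : Prop :=
  exists s, is_dpd E s /\ dpd_width s = k.

Definition pbool (P : Prop) : bool :=
  if excluded_middle_informative P then true else false.

Lemma has_dpd_exists (E : rel T) : exists k, pbool (has_dpd_of_width E k).
Proof.
exists (dpd_width [:: [set: T]]).
rewrite /pbool; case: excluded_middle_informative => // [[]].
exists [:: [set: T]]; split => //; split.
- by rewrite big_seq1.
- by move=> u v _; exists 0, 0; rewrite !in_setT.
- by move=> u [|i] [|j] [|l] //=.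
Qed.

Definition dpw (E : rel T) : nat := ex_minn (has_dpd_exists E).
End DPW.

Section Compositions.
Variables T1 T2 : finType.
Variables (E1 : rel T1) (E2 : rel T2).

Definition disj_union : rel (T1 + T2) := fun x y =>
  match x, y with
  | inl a, inl b => E1 a b
  | inr a, inr b => E2 a b
  | _, _ => false
  end.

Definition series_comp : rel (T1 + T2) := fun x y =>
  match x, y with
  | inl a, inl b => E1 a b
  | inr a, inr b => E2 a b
  | _, _ => true
  end.

Definition order_comp : rel (T1 + T2) := fun x y =>
  match x, y with
  | inl a, inl b => E1 a b
  | inr a, inr b => E2 a b
  | inl _, inr _ => true
  | inr _, inl _ => false
  end.

Definition is_directed_union (F : rel (T1 + T2)) : Prop :=
  [/\ forall a b, F (inl a) (inl b) = E1 a b,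
      forall a b, F (inr a) (inr b) = E2 a b &
      forall a b, F (inr a) (inl b) = false].
End Compositions.

(* Placing a decomposition of G before one of H decomposes every directed union
   of G and H with the larger of the two widths, and pulling a decomposition back
   along an injective arc-preserving map does not increase its width; this gives 1-3.
   Adding V_H to every bag of a decomposition of G decomposes G (x) H, so
   dpw(G (x) H) <= dpw(G) + |V_H|.  Conversely, in a decomposition of G (x) H each
   vertex occupies an interval of bags, and every vertex of G is joined to every
   vertex of H in both directions.  If two H-intervals are disjoint, every
   G-interval meets both, so the G-intervals pairwise meet: the intervals of one
   side, say H, pairwise meet.  Then the bags between the largest left end p and
   the smallest right end q of the H-intervals all contain V_H, every G-interval
   meets [p, q], and these bags restricted to V_G decompose G with |V_H| fewer
   vertices each. *)

From mathcomp Require Import all_boot zify.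
From Stdlib Require Import ClassicalEpsilon.

Set Implicit Arguments.
Unset Strict Implicit.
Unset Printing Implicit Defensive.

Lemma nth_map_set (aT rT : finType) (g : {set aT} -> {set rT}) s i :
  nth set0 (map g s) i = if i < size s then g (nth set0 s i) else set0.
Proof.
case: ltnP => [lt_i_s | le_s_i]; first exact: nth_map.
by rewrite nth_default ?size_map.
Qed.

Lemma card_preimset_add_le (aT rT : finType) (f : aT -> rT) (Y C : {set rT}) :
  injective f -> C \subset Y -> (forall a, f a \notin C) ->
  #|f @^-1: Y| + #|C| <= #|Y|.
Proof.
move=> f_inj sCY fNC.
have disj : f @: (f @^-1: Y) :&: C = set0.
  apply/setP => x; rewrite !inE; apply/negbTE/negP => /andP[/imsetP[a _ ->]].
  exact/negP/fNC.
rewrite -(card_imset _ f_inj) -cardsUI disj cards0 addn0.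
apply: subset_leq_card; rewrite subUset sCY andbT.
by apply/subsetP => y /imsetP[a]; rewrite inE => Ya ->.
Qed.

Lemma dpd_width_map_leD (aT rT : finType) (g : {set aT} -> {set rT}) s k :
  (forall X, #|g X| <= #|X| + k) -> dpd_width (map g s) <= dpd_width s + k.
Proof.
move=> card_g; rewrite /dpd_width big_map.
suff : \max_(X <- s) #|g X| <= \max_(X <- s) #|X| + k by lia.
apply/bigmax_leqP_seq => X s_X _; apply: leq_trans (card_g X) _.
by rewrite leq_add2r; apply: leq_bigmax_seq.
Qed.

Lemma dpd_width_map_le (aT rT : finType) (g : {set aT} -> {set rT}) s :
  (forall X, #|g X| <= #|X|) -> dpd_width (map g s) <= dpd_width s.
Proof.
move=> card_g; rewrite -[dpd_width s]addn0.
by apply: dpd_width_map_leD => X; rewrite addn0.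
Qed.

Section Decompositions.
Variable T : finType.
Implicit Types (E : rel T) (s : seq {set T}) (u v : T).

Lemma mem_nth_size s v i : v \in nth set0 s i -> i < size s.
Proof. by rewrite ltnNge; apply: contraL => le_s_i; rewrite nth_default ?in_set0. Qed.

Lemma bigcup_seq_setTP s :
  (\bigcup_(X <- s) X = [set: T]) <-> forall v, exists i, v \in nth set0 s i.
Proof.
have mem_cup v : (v \in \bigcup_(X <- s) X) = has (fun X : {set T} => v \in X) s.
  by elim: s => [|X s IHs]; rewrite ?big_nil ?in_set0 // big_cons in_setU IHs.
split=> [cover v | cover].
  have : v \in \bigcup_(X <- s) X by rewrite cover in_setT.
  by rewrite mem_cup => /(has_nthP set0)[i _ v_i]; exists i.
apply/setP => v; rewrite in_setT mem_cup; have [i v_i] := cover v.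
by apply/(has_nthP set0); exists i => //; apply: mem_nth_size v_i.
Qed.

Lemma card_nth_le_bigmax s i : #|nth set0 s i| <= \max_(X <- s) #|X|.
Proof.
case: (ltnP i (size s)) => [lt_i_s | le_s_i]; last by rewrite nth_default ?cards0.
by apply: leq_bigmax_seq => //; apply: mem_nth.
Qed.

Lemma pboolP (P : Prop) : reflect P (pbool P).
Proof. by rewrite /pbool; case: excluded_middle_informative; constructor. Qed.

Lemma dpw_witness E : exists2 s, is_dpd E s & dpd_width s = dpw E.
Proof. by rewrite /dpw; case: ex_minnP => m /pboolP[s [dpd_s <-]] _; exists s. Qed.

Lemma dpw_le_width E s : is_dpd E s -> dpw E <= dpd_width s.
Proof.
by move=> dpd_s; rewrite /dpw; case: ex_minnP => m _; apply; apply/pboolP; exists s.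
Qed.

Lemma dpd_width_cat s1 s2 :
  dpd_width (s1 ++ s2) = maxn (dpd_width s1) (dpd_width s2).
Proof. rewrite /dpd_width big_cat /=; lia. Qed.

Definition first_bag s v : nat := find (fun X : {set T} => v \in X) s.

Definition last_bag s v : nat := \max_(i < size s | v \in nth set0 s i) i.

Lemma first_bag_le s v i : v \in nth set0 s i -> first_bag s v <= i.
Proof.
move=> v_i; rewrite leqNgt; apply/negP => lt_i_first.
by have := before_find set0 lt_i_first; rewrite v_i.
Qed.

Lemma le_last_bag s v i : v \in nth set0 s i -> i <= last_bag s v.
Proof.
move=> v_i; exact: (leq_bigmax_cond (Ordinal (mem_nth_size v_i))).
Qed.

Section Decomposition.
Variables (E : rel T) (s : seq {set T}).
Hypothesis dpd_s : is_dpd E s.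

Lemma dpd_cover v : exists i, v \in nth set0 s i.
Proof. by case: dpd_s => /bigcup_seq_setTP. Qed.

Lemma mem_first_bag v : v \in nth set0 s (first_bag s v).
Proof.
have [i v_i] := dpd_cover v.
have has_v : has (fun X : {set T} => v \in X) s.
  by apply/(has_nthP set0); exists i => //; apply: mem_nth_size v_i.
exact: (nth_find set0 has_v).
Qed.

Lemma mem_last_bag v : v \in nth set0 s (last_bag s v).
Proof.
have [i v_i] := dpd_cover v.
have : 0 < #|[pred i : 'I_(size s) | v \in nth set0 s i]|.
  by apply/card_gt0P; exists (Ordinal (mem_nth_size v_i)); rewrite inE.
by case/(eq_bigmax_cond (@nat_of_ord _)) => i0; rewrite /last_bag inE => v_i0 ->.
Qed.

Lemma dpd_mem_between v l :
  first_bag s v <= l <= last_bag s v -> v \in nth set0 s l.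
Proof.
case/andP=> first_l l_last; case: dpd_s => _ _ convex.
apply: (convex v (first_bag s v) (last_bag s v)) => //.
- exact: mem_nth_size (mem_last_bag v).
- exact: mem_first_bag.
- exact: mem_last_bag.
Qed.

Lemma dpd_first_le_last u v : E u v -> first_bag s u <= last_bag s v.
Proof.
case: dpd_s => _ arcs _ /arcs[i [j [le_ij _ u_i v_j]]].
by apply: leq_trans (first_bag_le u_i) (leq_trans le_ij (le_last_bag v_j)).
Qed.

End Decomposition.
End Decompositions.

Definition slice (T : Type) p q (s : seq T) : seq T := take (q.+1 - p) (drop p s).

Lemma nth_slice (T : Type) (x0 : T) p q s k :
  nth x0 (slice p q s) k = if p + k <= q then nth x0 s (p + k) else x0.
Proof.
rewrite /slice; case: leqP => [le_k | lt_k].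
  by rewrite nth_take ?nth_drop //; lia.
by rewrite nth_default // size_take_min; lia.
Qed.

Section Slice.
Variables (T : finType) (E : rel T) (s : seq {set T}) (p q : nat).

Lemma mem_nth_slice v k :
  (v \in nth set0 (slice p q s) k) = (p + k <= q) && (v \in nth set0 s (p + k)).
Proof. by rewrite nth_slice; case: leqP; rewrite ?in_set0. Qed.

Lemma dpd_slice : is_dpd E s ->
  (forall v, exists2 l, p <= l <= q & v \in nth set0 s l) -> is_dpd E (slice p q s).
Proof.
move=> dpd_s window; have [_ arcs convex] := dpd_s.
split.
- apply/bigcup_seq_setTP => v; have [l /andP[p_l l_q] v_l] := window v.
  by exists (l - p); rewrite mem_nth_slice subnKC // v_l; lia.
- move=> u v /arcs[i [j [le_ij _ u_i v_j]]].
  have [lu /andP[p_lu lu_q] u_lu] := window u.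
  have [lv /andP[p_lv lv_q] v_lv] := window v.
  (* Clamping both ends of an arc to [p, q] keeps them ordered and in place. *)
  have clampP w i' l : w \in nth set0 s i' -> w \in nth set0 s l -> p <= l <= q ->
      w \in nth set0 s (p + (minn (maxn i' p) q - p)).
    move=> w_i' w_l /andP[p_l l_q]; apply: (dpd_mem_between dpd_s).
    have := first_bag_le w_i'; have := first_bag_le w_l.
    have := le_last_bag w_i'; have := le_last_bag w_l; lia.
  have u_i' := clampP u i lu u_i u_lu (introT andP (conj p_lu lu_q)).
  have v_j' := clampP v j lv v_j v_lv (introT andP (conj p_lv lv_q)).
  exists (minn (maxn i p) q - p), (minn (maxn j p) q - p); split; first lia.
  + apply: (@mem_nth_size _ _ v); rewrite mem_nth_slice v_j'; lia.
  + by rewrite mem_nth_slice u_i'; lia.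
  + by rewrite mem_nth_slice v_j'; lia.
- move=> v i j l le_il le_lj _; rewrite !mem_nth_slice => /andP[_ v_i] /andP[j_le v_j].
  apply/andP; split; first lia.
  apply: (convex v (p + i) (p + j)) => //; first lia.
  + by rewrite leq_add2l.
  + exact: mem_nth_size v_j.
Qed.

End Slice.

Section Pullback.
Variables (aT rT : finType) (E' : rel aT) (F : rel rT) (f : aT -> rT).
Hypotheses (f_inj : injective f) (f_homo : {homo f : a b / E' a b >-> F a b}).

Definition preim_bags (s : seq {set rT}) : seq {set aT} :=
  map (fun X : {set rT} => f @^-1: X) s.

Lemma mem_nth_preim (s : seq {set rT}) a i :
  (a \in nth set0 (preim_bags s) i) = (f a \in nth set0 s i).
Proof.
rewrite nth_map_set; case: ltnP => [_ | le_s_i]; first by rewrite inE.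
by rewrite nth_default // !inE.
Qed.

Lemma dpd_preim (s : seq {set rT}) : is_dpd F s -> is_dpd E' (preim_bags s).
Proof.
case=> /bigcup_seq_setTP cover arcs convex; split.
- apply/bigcup_seq_setTP => a; have [i fa_i] := cover (f a).
  by exists i; rewrite mem_nth_preim.
- move=> a b /f_homo/arcs[i [j [le_ij lt_j fa_i fb_j]]]; exists i, j.
  by rewrite size_map !mem_nth_preim.
- by move=> a i j l; rewrite size_map !mem_nth_preim; apply: convex.
Qed.

Lemma dpw_le_width_preim (s : seq {set rT}) : is_dpd F s -> dpw E' <= dpd_width s.
Proof.
move=> /dpd_preim/dpw_le_width/leq_trans; apply; apply: dpd_width_map_le => X.
have fN0 a : f a \notin set0 by rewrite in_set0.
by have := card_preimset_add_le f_inj (sub0set X) fN0; rewrite cards0 addn0.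
Qed.

Lemma dpw_homo_le : dpw E' <= dpw F.
Proof. by have [s dpd_s <-] := dpw_witness F; apply: dpw_le_width_preim. Qed.

Variables (s : seq {set rT}) (C : {set rT}).
Hypotheses (dpd_s : is_dpd F s) (fNC : forall a, f a \notin C).

(* [a0] makes [aT] nonempty: otherwise the restricted bags could all be empty,
   of width 0 rather than -1. *)
Lemma dpw_add_card_le_window (a0 : aT) p q :
  (forall l, p <= l <= q -> C \subset nth set0 s l) ->
  (forall a, exists2 l, p <= l <= q & f a \in nth set0 s l) ->
  dpw E' + #|C| <= dpd_width s.
Proof.
move=> C_window f_window.
set s' := slice p q (preim_bags s).
have dpd_s' : is_dpd E' s'.
  apply: dpd_slice (dpd_preim dpd_s) _ => a.
  by have [l window_l fa_l] := f_window a; exists l; rewrite ?mem_nth_preim.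
have bag_bound k : k < size s' -> #|nth set0 s' k| + #|C| <= \max_(X <- s) #|X|.
  move=> lt_k; have le_k : p + k <= q by move: lt_k; rewrite size_take_min; lia.
  have -> : nth set0 s' k = f @^-1: nth set0 s (p + k).
    by apply/setP => a; rewrite mem_nth_slice mem_nth_preim inE le_k.
  apply: leq_trans (card_nth_le_bigmax s (p + k)).
  by apply: card_preimset_add_le => //; apply: C_window; lia.
have s'_pos : 0 < \max_(X <- s') #|X|.
  have [k a0_k] := dpd_cover dpd_s' a0.
  by apply: leq_trans (card_nth_le_bigmax s' k); apply/card_gt0P; exists a0.
have s'_bound : \max_(X <- s') #|X| <= \max_(X <- s) #|X| - #|C|.
  apply/bigmax_leqP_seq => X /(nthP set0)[k lt_k <-] _.
  by have := leq_sub2r #|C| (bag_bound k lt_k); rewrite addnK.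
have := dpw_le_width dpd_s'; rewrite /dpd_width; lia.
Qed.

Lemma dpw_add_card_le_overlap (a0 : aT) :
  (forall a c, c \in C -> F (f a) c && F c (f a)) ->
  {in C &, forall c c', first_bag s c <= last_bag s c'} ->
  dpw E' + #|C| <= dpd_width s.
Proof.
move=> f_C C_overlap.
have [-> | [c0 C_c0]] := set_0Vmem C; first by rewrite cards0 addn0 dpw_le_width_preim.
have [cp C_cp first_max] := arg_maxnP (first_bag s) C_c0.
have [cq C_cq last_min] := arg_minnP (last_bag s) C_c0.
have le_pq := C_overlap _ _ C_cp C_cq.
apply: (dpw_add_card_le_window a0 (p := first_bag s cp) (q := last_bag s cq)).
- move=> l /andP[p_l l_q]; apply/subsetP => c C_c; apply: (dpd_mem_between dpd_s).
  by have := first_max c C_c; have := last_min c C_c; lia.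
- move=> a; exists (maxn (first_bag s (f a)) (first_bag s cp)).
  + have /andP[fa_cq _] := f_C a cq C_cq.
    by have := dpd_first_le_last dpd_s fa_cq; lia.
  + apply: (dpd_mem_between dpd_s).
    have /andP[_ cp_fa] := f_C a cp C_cp.
    have := dpd_first_le_last dpd_s cp_fa.
    have := first_bag_le (mem_last_bag dpd_s (f a)); lia.
Qed.

End Pullback.

Section Compositions.
Variables (T1 T2 : finType) (E1 : rel T1) (E2 : rel T2).

Definition order_bags (s1 : seq {set T1}) (s2 : seq {set T2}) : seq {set T1 + T2} :=
  map (fun X : {set T1} => inl @: X) s1 ++ map (fun X : {set T2} => inr @: X) s2.

Lemma mem_order_bags_inl s1 s2 a i :
  (inl a \in nth set0 (order_bags s1 s2) i) = (a \in nth set0 s1 i).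
Proof.
rewrite nth_cat size_map; case: ltnP => [lt_i | le_i].
  by rewrite nth_map_set lt_i mem_imset //; apply: inl_inj.
rewrite [nth _ s1 i]nth_default // in_set0 nth_map_set; case: ifP; rewrite ?in_set0 //.
by move=> _; apply/imsetP => -[].
Qed.

Lemma mem_order_bags_inr s1 s2 b i :
  (inr b \in nth set0 (order_bags s1 s2) i) =
  (size s1 <= i) && (b \in nth set0 s2 (i - size s1)).
Proof.
rewrite nth_cat size_map; case: ltnP => [lt_i | le_i] /=.
  by rewrite nth_map_set lt_i; apply/imsetP => -[].
rewrite nth_map_set; case: ltnP => [_ | le_s2].
  by rewrite mem_imset //; apply: inr_inj.
by rewrite nth_default ?in_set0.
Qed.

Lemma dpd_order_bags s1 s2 :
  is_dpd E1 s1 -> is_dpd E2 s2 -> is_dpd (order_comp E1 E2) (order_bags s1 s2).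
Proof.
move=> dpd_s1 dpd_s2; have [_ arcs1 convex1] := dpd_s1.
have [_ arcs2 convex2] := dpd_s2.
have size_bags : size (order_bags s1 s2) = size s1 + size s2.
  by rewrite size_cat !size_map.
split.
- apply/bigcup_seq_setTP => -[a | b].
    by have [i a_i] := dpd_cover dpd_s1 a; exists i; rewrite mem_order_bags_inl.
  have [j b_j] := dpd_cover dpd_s2 b; exists (size s1 + j).
  by rewrite mem_order_bags_inr leq_addr addKn.
- move=> [a | a] [b | b] //=.
  + case/arcs1 => i [j [le_ij lt_j a_i b_j]]; exists i, j.
    by rewrite !mem_order_bags_inl size_bags ltn_addr.
  + move=> _; have [i a_i] := dpd_cover dpd_s1 a; have [j b_j] := dpd_cover dpd_s2 b.
    exists i, (size s1 + j).
    rewrite mem_order_bags_inl mem_order_bags_inr leq_addr addKn.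
    have lt_i := mem_nth_size a_i; have lt_j := mem_nth_size b_j.
    by rewrite size_bags; split => //; lia.
  + case/arcs2 => i [j [le_ij lt_j a_i b_j]]; exists (size s1 + i), (size s1 + j).
    by rewrite !mem_order_bags_inr !leq_addr !addKn size_bags; split => //; lia.
- move=> [a | b] i j l le_il le_lj _.
    rewrite !mem_order_bags_inl => a_i a_j.
    exact: convex1 (mem_nth_size a_j) a_i a_j.
  rewrite !mem_order_bags_inr => /andP[le_i b_i] /andP[le_j b_j].
  apply/andP; split; first lia.
  apply: (convex2 b (i - size s1) (j - size s1)) => //; try lia.
  exact: mem_nth_size b_j.
Qed.

Lemma dpw_order_comp_le : dpw (order_comp E1 E2) <= maxn (dpw E1) (dpw E2).
Proof.
have [s1 dpd_s1 <-] := dpw_witness E1; have [s2 dpd_s2 <-] := dpw_witness E2.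
apply: leq_trans (dpw_le_width (dpd_order_bags dpd_s1 dpd_s2)) _.
rewrite /order_bags dpd_width_cat geq_max.
by rewrite !(leq_trans (dpd_width_map_le _ (leq_imset_card _))) ?leq_maxl ?leq_maxr.
Qed.

Lemma dpw_directed_union F :
  is_directed_union E1 E2 F -> dpw F = maxn (dpw E1) (dpw E2).
Proof.
case=> F_inl F_inr F_rl; apply/eqP; rewrite eqn_leq geq_max.
have F_order : {homo id : x y / F x y >-> order_comp E1 E2 x y}.
  by move=> [a | b] [a' | b'] /=; rewrite ?F_inl ?F_inr ?F_rl.
rewrite (leq_trans (dpw_homo_le (@inj_id _) F_order)) ?dpw_order_comp_le //=.
have inl_homo : {homo inl : a b / E1 a b >-> F a b} by move=> a b; rewrite F_inl.
have inr_homo : {homo inr : a b / E2 a b >-> F a b} by move=> a b; rewrite F_inr.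
by rewrite (dpw_homo_le inl_inj inl_homo) (dpw_homo_le inr_inj inr_homo).
Qed.

(* The extra empty bag keeps V_H covered when [s] is empty. *)
Definition series_bags (s : seq {set T1}) : seq {set T1 + T2} :=
  map (fun X : {set T1} => inl @: X :|: inr @: [set: T2]) (set0 :: s).

Lemma mem_series_bags_inl s a i :
  (inl a \in nth set0 (series_bags s) i) = (a \in nth set0 (set0 :: s) i).
Proof.
rewrite nth_map_set; case: ltnP => [_ | le_i]; last by rewrite nth_default ?in_set0.
have inl_Nrange : (inl a \in inr @: [set: T2]) = false by apply/imsetP => -[].
by rewrite in_setU inl_Nrange orbF mem_imset //; apply: inl_inj.
Qed.

Lemma mem_series_bags_inr s b i :
  (inr b \in nth set0 (series_bags s) i) = (i <= size s).
Proof.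
rewrite nth_map_set /= ltnS; case: ifP => _; last by rewrite in_set0.
by rewrite in_setU mem_imset ?in_setT ?orbT //; apply: inr_inj.
Qed.

Lemma dpd_series_bags s : is_dpd E1 s -> is_dpd (series_comp E1 E2) (series_bags s).
Proof.
move=> dpd_s; have [_ arcs convex] := dpd_s.
have size_bags : size (series_bags s) = (size s).+1 by rewrite size_map.
have cover v : exists i, v \in nth set0 (series_bags s) i.
  case: v => [a | b]; last by exists 0; rewrite mem_series_bags_inr.
  by have [i a_i] := dpd_cover dpd_s a; exists i.+1; rewrite mem_series_bags_inl.
split; first exact/bigcup_seq_setTP.
- move=> [a | a] [b | b] arc.
  + have [i [j [le_ij lt_j a_i b_j]]] := arcs a b arc; exists i.+1, j.+1.
    by rewrite !mem_series_bags_inl size_bags.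
  + have [i a_i] := cover (inl a); have lt_i := mem_nth_size a_i.
    by exists i, i; rewrite mem_series_bags_inr; split => //; rewrite -ltnS -size_bags.
  + have [i b_i] := cover (inl b); have lt_i := mem_nth_size b_i.
    by exists i, i; rewrite mem_series_bags_inr; split => //; rewrite -ltnS -size_bags.
  + by exists 0, 0; rewrite !mem_series_bags_inr size_bags.
- move=> [a | b] i j l le_il le_lj; rewrite size_bags; last first.
    by rewrite !mem_series_bags_inr => lt_j _ _; apply: leq_trans le_lj _.
  rewrite !mem_series_bags_inl => lt_j.
  case: i le_il => [|i] le_il; first by rewrite in_set0.
  case: l le_il le_lj => [|l] // le_il le_lj; case: j le_lj lt_j => [|j] // le_lj lt_j.
  exact: convex.
Qed.

Lemma dpw_series_comp_le : dpw (series_comp E1 E2) <= dpw E1 + #|T2|.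
Proof.
have [s dpd_s <-] := dpw_witness E1.
apply: leq_trans (dpw_le_width (dpd_series_bags dpd_s)) _.
have -> : dpd_width s = dpd_width (set0 :: s).
  by rewrite /dpd_width big_cons cards0 max0n.
apply: dpd_width_map_leD => X; rewrite -cardsT.
by apply: leq_trans (leq_card_setU _ _) _; apply: leq_add; apply: leq_imset_card.
Qed.

Lemma dpw_series_comp_ge :
  minn (dpw E1 + #|T2|) (dpw E2 + #|T1|) <= dpw (series_comp E1 E2).
Proof.
have [s dpd_s <-] := dpw_witness (series_comp E1 E2).
have inl_homo : {homo inl : a b / E1 a b >-> series_comp E1 E2 a b} by [].
have inr_homo : {homo inr : a b / E2 a b >-> series_comp E1 E2 a b} by [].
have inlNinr (a : T1) : inl a \notin inr @: [set: T2] by apply/imsetP => -[].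
have inrNinl (b : T2) : inr b \notin inl @: [set: T1] by apply/imsetP => -[].
have cardT1 : #|@inl T1 T2 @: [set: T1]| = #|T1|.
  by rewrite card_imset ?cardsT //; apply: inl_inj.
have cardT2 : #|@inr T1 T2 @: [set: T2]| = #|T2|.
  by rewrite card_imset ?cardsT //; apply: inr_inj.
case: (pickP (fun hh : T2 * T2 => last_bag s (inr hh.2) < first_bag s (inr hh.1)))
  => [[h h'] /= lt_h'_h | overlap2].
  apply: leq_trans (geq_minr _ _) _; rewrite -cardT1.
  apply: (dpw_add_card_le_overlap inr_inj inr_homo dpd_s inrNinl h).
    by move=> b _ /imsetP[a _ ->].
  move=> _ _ /imsetP[g _ ->] /imsetP[g' _ ->].
  have := dpd_first_le_last dpd_s (u := inl g) (v := inr h') isT.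
  have := dpd_first_le_last dpd_s (u := inr h) (v := inl g') isT; lia.
case: (pickP (predT : pred T1)) => [g0 _ | T1_0]; last first.
  apply: leq_trans (geq_minr _ _) _; rewrite (eq_card0 T1_0) addn0.
  exact: (dpw_le_width_preim inr_inj inr_homo dpd_s).
apply: leq_trans (geq_minl _ _) _; rewrite -cardT2.
apply: (dpw_add_card_le_overlap inl_inj inl_homo dpd_s inlNinr g0).
  by move=> a _ /imsetP[b _ ->].
move=> _ _ /imsetP[h _ ->] /imsetP[h' _ ->].
by have /negbT := overlap2 (h, h'); rewrite -leqNgt.
Qed.

End Compositions.

Definition sum_swap (A B : Type) (x : A + B) : B + A :=
  match x with inl a => inr a | inr b => inl b end.

Lemma sum_swapK (A B : Type) : cancel (@sum_swap A B) (@sum_swap B A).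
Proof. by case. Qed.

Lemma dpw_series_comp_sym (T1 T2 : finType) (E1 : rel T1) (E2 : rel T2) :
  dpw (series_comp E1 E2) <= dpw (series_comp E2 E1).
Proof. by apply: (dpw_homo_le (can_inj (@sum_swapK T1 T2))) => -[a | b] [a' | b']. Qed.

Theorem theorem3p8 (T1 T2 : finType) (E1 : rel T1) (E2 : rel T2)
    (irrE1 : irreflexive E1) (irrE2 : irreflexive E2) :
  [/\ dpw (disj_union E1 E2) = maxn (dpw E1) (dpw E2),
      dpw (order_comp E1 E2) = maxn (dpw E1) (dpw E2),
      (forall F : rel (T1 + T2), is_directed_union E1 E2 F ->
         dpw F = maxn (dpw E1) (dpw E2)) &
      dpw (series_comp E1 E2) = minn (dpw E1 + #|T2|) (dpw E2 + #|T1|)].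
Proof.
have directed_union F := @dpw_directed_union T1 T2 E1 E2 F.
split; [exact/directed_union | exact/directed_union | exact: directed_union |].
apply/eqP; rewrite eqn_leq dpw_series_comp_ge andbT leq_min dpw_series_comp_le /=.
exact: leq_trans (dpw_series_comp_sym E1 E2) (dpw_series_comp_le E2 E1).
Qed.
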